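(* Let $d_n$ denote the number of derangements of $n$ elements (permutations of $\{1,\dots,n\}$ with no fixed points). Then the sequence $\{d_n\}_{n\ge 3}$ is asymptotically infinitely log-monotonic: for every integer $k\ge 0$ there exists $N\ge 3$ such that $\{d_n\}_{n\ge N}$ is log-monotonic of order $k$.
   Context: For a sequence $\{z_n\}$ of positive numbers, define the operator $R\{z_n\}=\{z_{n+1}/z_n\}$. A sequence of positive numbers $\{x_n\}$ is log-convex if $x_{n-1}x_{n+1}\ge x_n^2$ and log-concave if $x_{n-1}x_{n+1}\le x_n^2$, for all indices where these terms are defined. A sequence $\{z_n\}$ is log-monotonic of order $k$ if for every odd $r\le k-1$ the sequence $R^r\{z_n\}$ is log-concave and for every even $r\le k-1$ (including $r=0$) the sequence $R^r\{z_n\}$ is log-convex. *)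

From mathcomp Require Import all_boot all_order all_algebra all_fingroup.
Set Implicit Arguments. Unset Strict Implicit. Unset Printing Implicit Defensive.
Import Order.TTheory GRing.Theory Num.Theory.
Local Open Scope ring_scope.

Definition derangement_number (n : nat) : nat :=
  #|[set s : 'S_n | [forall i, s i != i]]|.

Definition ratio_op (R : realFieldType) (z : nat -> R) : nat -> R :=
  fun n => z n.+1 / z n.

Definition log_convex (R : realFieldType) (x : nat -> R) : Prop :=
  forall n : nat, x n.+1 ^+ 2 <= x n * x n.+2.

Definition log_concave (R : realFieldType) (x : nat -> R) : Prop :=
  forall n : nat, x n * x n.+2 <= x n.+1 ^+ 2.

Definition log_monotonic_of_order (R : realFieldType) (k : nat) (z : nat -> R) : Prop :=
  forall r : nat, (r < k)%N ->
    (odd r -> log_concave (iter r (@ratio_op R) z)) /\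
    (~~ odd r -> log_convex (iter r (@ratio_op R) z)).

(* Counting permutations of 'I_n without fixed points among the first k
   points by inclusion-exclusion gives d_{n+1} = (n+1) d_n + (-1)^{n+1}, hence
   log (d_{n+1} / d_n) = log (n+1) + e_n with |e_n| <= 1/d_n.  Since R^r d = exp (D^r log d)
   for the forward difference D, log-convexity (resp. log-concavity) of R^r d is the
   positivity (resp. negativity) of D^{r+1} log (d_{n+1} / d_n).  By the mean value theorem
   (-1)^m D^{m+1} log (n+1) >= c / (n+m+2)^{m+1}, whereas |D^{m+1} e_n| <= 2^{m+1} / d_n decays
   faster than any power of n because d grows factorially; so that sign is (-1)^m for n
   large.  The iterated ratios of an integer sequence are rational, so the result, proved
   over the classical reals, holds in every real field. *)

Set Warnings "-notation-overridden,-ambiguous-paths".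
From Stdlib Require Import Reals Lra Lia.
From Coquelicot Require Import Coquelicot.
From mathcomp Require Import all_boot all_order all_algebra all_fingroup.
From mathcomp Require Import zify Rstruct.

Import GRing.Theory Num.Theory.

Definition fixfree_below {n} k (s : 'S_n) : bool :=
  [forall i : 'I_n, (i < k)%N ==> (s i != i)].

Definition prefix_derangements n k : nat := #|[set s : 'S_n | fixfree_below k s]|.

Lemma prefix_derangements0 n : prefix_derangements n 0 = n`!.
Proof. by rewrite -card_Sn; apply: eq_card => s; rewrite inE; apply/forallP. Qed.

Lemma derangement_numberE n : derangement_number n = prefix_derangements n n.
Proof.
apply: eq_card => s; rewrite !inE; apply/forallP/forallP => H i.
  by rewrite ltn_ord H.
by have := H i; rewrite ltn_ord.
Qed.

Lemma fixfree_belowS {n} k (s : 'S_n) (i : 'I_n) : i = k :> nat ->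
  fixfree_below k.+1 s = fixfree_below k s && (s i != i).
Proof.
move=> ik; apply/forallP/andP => [H | [/forallP H si] j].
  split; last by have := H i; rewrite ik ltnS leqnn.
  by apply/forallP => j; apply/implyP => jk; apply: (implyP (H j)); apply: ltnW.
apply/implyP; rewrite ltnS leq_eqVlt => /orP[/eqP jk | jk]; last exact: (implyP (H j)).
by have -> : j = i by apply: val_inj; rewrite /= jk ik.
Qed.

Lemma fixfree_below_lift m k (i : 'I_m.+1) (t : 'S_m) : (k <= i)%N ->
  fixfree_below k (lift_perm i i t) = fixfree_below k t.
Proof.
move=> ki; apply/forallP/forallP => H j; apply/implyP => jk.
  have lj : lift i j = j :> nat by rewrite /= /bump leqNgt (leq_trans jk ki).
  have := implyP (H (lift i j)); rewrite lj lift_perm_lift (inj_eq (@lift_inj _ i)).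
  exact.
case: (unliftP i j) => [j'|] ej; last by move: jk; rewrite ej ltnNge ki.
have j'k : (j' < k)%N by move: jk; rewrite ej /= /bump; case: leqP => /=; lia.
by rewrite ej lift_perm_lift (inj_eq (@lift_inj _ i)); apply: (implyP (H j')).
Qed.

Lemma card_perm_fixing n (i : 'I_n.+1) (P : pred 'S_n.+1) :
  #|[set s : 'S_n.+1 | (s i == i) && P s]| = #|[set t : 'S_n | P (lift_perm i i t)]|.
Proof.
have lift_perm_inj : injective (lift_perm i i).
  move=> s t /permP e; apply/permP => j; apply: (@lift_inj _ i).
  by rewrite -!(lift_perm_lift i) e.
rewrite -(card_imset _ lift_perm_inj); apply: eq_card => s; rewrite inE.
apply/andP/imsetP => [[/eqP si Ps] | [t]]; last first.
  by rewrite inE => Pt ->; rewrite lift_perm_id eqxx.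
pose f k := odflt k (unlift i (s (lift i k))).
have fK k : lift i (f k) = s (lift i k).
  have : i != s (lift i k) by rewrite -{1}si (inj_eq perm_inj) neq_lift.
  by case/unlift_some => k' sk e; rewrite /f e sk.
have f_inj : injective f.
  by move=> k1 k2 /(congr1 (lift i)); rewrite !fK => /perm_inj/lift_inj.
have lift_f : lift_perm i i (perm f_inj) = s.
  apply/permP => j; case: (unliftP i j) => [k|] ->; last by rewrite lift_perm_id si.
  by rewrite lift_perm_lift permE fK.
by exists (perm f_inj); rewrite ?inE lift_f.
Qed.

Lemma prefix_derangementsS m k : (k <= m)%N ->
  prefix_derangements m.+1 k = (prefix_derangements m.+1 k.+1 + prefix_derangements m k)%N.
Proof.
move=> km; set i : 'I_m.+1 := inord k; have ik : i = k :> nat by rewrite inordK.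
rewrite /prefix_derangements -(cardsID [set s : 'S_m.+1 | s i == i]) addnC.
congr (_ + _)%N.
  by apply: eq_card => s; rewrite !inE (fixfree_belowS k s i ik) andbC.
rewrite (_ : _ :&: _ = [set s : 'S_m.+1 | (s i == i) && fixfree_below k s]); last first.
  by apply/setP => s; rewrite !inE andbC.
rewrite card_perm_fixing; apply: eq_card => t; rewrite !inE fixfree_below_lift //.
by rewrite ik.
Qed.

Section InclusionExclusion.
Local Open Scope ring_scope.

Definition alternating_fact_sum (n k : nat) : int :=
  \sum_(i < k.+1) (-1) ^+ i * ('C(k, i) * (n - i)`!)%:R.

Lemma alternating_fact_sumS m k :
  alternating_fact_sum m.+1 k.+1 = alternating_fact_sum m.+1 k - alternating_fact_sum m k.
Proof.
rewrite /alternating_fact_sum.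
set f := fun i : nat => (-1) ^+ i * ('C(k, i.+1) * (m - i)`!)%:R : int.
set g := fun i : nat => (-1) ^+ i * ('C(k, i) * (m - i)`!)%:R : int.
have -> : \sum_(i < k.+2) (-1) ^+ i * ('C(k.+1, i) * (m.+1 - i)`!)%:R
   = ((m.+1)`!)%:R - \sum_(i < k.+1) f i - \sum_(i < k.+1) g i :> int.
  rewrite big_ord_recl /= expr0 mul1r bin0 subn0 mul1n -addrA; congr (_ + _).
  rewrite -opprD -big_split /= -sumrN; apply: eq_bigr => i _.
  rewrite /bump /= binS subSS mulnDl natrD /f /g exprS mulN1r.
  by rewrite mulNr mulrDr.
have -> : \sum_(i < k.+1) (-1) ^+ i * ('C(k, i) * (m.+1 - i)`!)%:R
   = ((m.+1)`!)%:R - \sum_(i < k) f i :> int.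
  rewrite big_ord_recl /= expr0 mul1r bin0 subn0 mul1n; congr (_ + _).
  rewrite -sumrN; apply: eq_bigr => i _.
  by rewrite /bump /= subSS /f exprS mulN1r mulNr.
by rewrite big_ord_recr /= /f bin_small // mul0n mulr0 addr0.
Qed.

Lemma prefix_derangementsE n k : (k <= n)%N ->
  (prefix_derangements n k)%:R = alternating_fact_sum n k.
Proof.
elim: k n => [|k IH] n kn.
  by rewrite prefix_derangements0 /alternating_fact_sum big_ord1 /= mul1r bin0 mul1n subn0.
case: n kn => [|m] // km.
rewrite alternating_fact_sumS -!IH ?(ltnW km) // (prefix_derangementsS m k km) natrD.
by rewrite addrK.
Qed.

Lemma derangement_number0 : derangement_number 0 = 1%N.
Proof.
apply/eqP; rewrite -(eqr_nat int) derangement_numberE prefix_derangementsE //.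
by rewrite /alternating_fact_sum big_ord1.
Qed.

(* Termwise, ['C(n.+1, i) * (n.+1 - i)`! = n.+1 * ('C(n, i) * (n - i)`!)], both being
   [n.+1`! %/ i`!]; only the last term [i = n.+1] survives. *)
Lemma derangement_numberS n : (derangement_number n.+1)%:R =
  (n.+1 * derangement_number n)%:R + (-1) ^+ n.+1 :> int.
Proof.
rewrite !derangement_numberE natrM !prefix_derangementsE //.
rewrite /alternating_fact_sum big_ord_recr /= subnn binn mul1n mulr1; congr (_ + _).
rewrite mulr_sumr; apply: eq_bigr => i _; rewrite mulrCA -natrM; congr (_ * _%:R).
have hi : (i <= n)%N by rewrite -ltnS.
apply/eqP; rewrite -(eqn_pmul2r (fact_gt0 i)) -!mulnA.
rewrite [((n.+1 - i)`! * _)%N]mulnC [((n - i)`! * _)%N]mulnC.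
by rewrite !bin_fact ?factS // (leq_trans hi).
Qed.

End InclusionExclusion.

Open Scope R_scope.

Definition rdelta (f : R -> R) (y : R) : R := f (y + 1) - f y.
Definition rdiff (m : nat) : (R -> R) -> R -> R := iter m rdelta.

Lemma rdiffZ m a f y : rdiff m (fun t => a * f t) y = a * rdiff m f y.
Proof. by elim: m y => [|m IH] y //=; rewrite /rdelta !IH; ring. Qed.

Lemma derivable_pt_lim_shift g y l : derivable_pt_lim g (y + 1) l ->
  derivable_pt_lim (fun t => g (t + 1)) y l.
Proof.
move=> Hg eps heps; have [del Hdel] := Hg eps heps; exists del => h h0 hdel.
by rewrite (_ : y + h + 1 = y + 1 + h); [apply: Hdel | ring].
Qed.

Lemma rdiff_derive m f f' :
  (forall y, 0 < y -> derivable_pt_lim f y (f' y)) ->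
  forall y, 0 < y -> derivable_pt_lim (rdiff m f) y (rdiff m f' y).
Proof.
move=> Hf; elim: m => [|m IH] y hy /=; first exact: Hf.
apply: derivable_pt_lim_minus (IH _ hy).
by apply: derivable_pt_lim_shift; apply: IH; lra.
Qed.

Lemma rdiff_MVT m f f' y :
  (forall y, 0 < y -> derivable_pt_lim f y (f' y)) -> 0 < y ->
  exists2 xi, y < xi < y + 1 & rdiff m.+1 f y = rdiff m f' xi.
Proof.
move=> Hf hy.
have [|xi [Hxi ?]] := MVT_cor2 (rdiff m f) (rdiff m f') y (y + 1) ltac:(lra).
  by move=> xi ?; apply: rdiff_derive => //; lra.
by exists xi => //=; rewrite /rdelta Hxi; ring.
Qed.

Lemma derivable_pt_lim_inv_pow p y : 0 < y ->
  derivable_pt_lim (fun t => / t ^ p) y (- INR p * / y ^ p.+1).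
Proof.
move=> hy; have hy0 : y <> 0 by lra.
apply/is_derive_Reals; auto_derive; first exact: pow_nonzero.
case: p => [|p]; first by rewrite /=; ring.
have := pow_nonzero y p hy0; rewrite [Nat.pred _]/= [y ^ p.+1]/= => hp.
by rewrite [y ^ p.+2]/=; field.
Qed.

Lemma Rinv_pow_le a b q : 0 < a -> a <= b -> / b ^ q <= / a ^ q.
Proof.
move=> ha hab; apply: Rinv_le_contravar; first exact: pow_lt.
by apply: pow_incr; lra.
Qed.

(* Mean value theorem: the [m.+1]-th difference of [t^-(p+1)] is [-(p+1)] times the
   [m]-th difference of [t^-(p+2)] at some point of [(y, y+1)]. *)
Lemma rdiff_inv_pow_lower_bound m p : exists2 c, 0 < c & forall y, 0 < y ->
  c / (y + INR m) ^ (p.+1 + m) <= (-1) ^ m * rdiff m (fun t => / t ^ p.+1) y.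
Proof.
elim: m p => [|m IH] p.
  exists 1 => [|y hy]; first lra.
  by rewrite /= addn0 Rplus_0_r /Rdiv; lra.
have [c hc Hc] := IH p.+1; have hp : 0 < INR p.+1 by apply: lt_0_INR; lia.
exists (INR p.+1 * c) => [|y hy]; first exact: Rmult_lt_0_compat.
have [xi hxi ->] :=
  rdiff_MVT m _ _ y (derivable_pt_lim_inv_pow p.+1) hy.
have hD := Hc xi ltac:(lra).
have hxy : / (y + INR m.+1) ^ (p.+1 + m.+1) <= / (xi + INR m) ^ (p.+2 + m).
  by rewrite addnS; apply: Rinv_pow_le; rewrite ?S_INR; have := pos_INR m; lra.
rewrite rdiffZ [(-1) ^ m.+1]/= /Rdiv Rmult_assoc.
apply: (Rle_trans _ (INR p.+1 * (c * / (xi + INR m) ^ (p.+2 + m)))).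
  by apply/Rmult_le_compat_l/Rmult_le_compat_l; lra.
rewrite /Rdiv in hD; nra.
Qed.

Lemma rdiff_ln_lower_bound m : exists2 c, 0 < c & forall y, 0 < y ->
  c / (y + INR m.+1) ^ m.+1 <= (-1) ^ m * rdiff m.+1 ln y.
Proof.
have [c hc Hc] := rdiff_inv_pow_lower_bound m 0.
exists c => // y hy.
have dln z : 0 < z -> derivable_pt_lim ln z (/ z ^ 1).
  by rewrite pow_1; apply: derivable_pt_lim_ln.
have [xi hxi ->] := rdiff_MVT m ln _ y dln hy.
apply: Rle_trans (Hc xi ltac:(lra)); apply: Rmult_le_compat_l; first lra.
by apply: Rinv_pow_le; rewrite ?S_INR; have := pos_INR m; lra.
Qed.

Definition ndelta (f : nat -> R) (n : nat) : R := f n.+1 - f n.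
Definition ndiff (m : nat) : (nat -> R) -> nat -> R := iter m ndelta.

Lemma ndiff_rdiff m g a n :
  ndiff m (fun k => g (INR k + a)) n = rdiff m g (INR n + a).
Proof.
elim: m n => [|m IH] n //=; rewrite /ndelta /rdelta !IH S_INR.
by rewrite (_ : INR n + 1 + a = INR n + a + 1) //; ring.
Qed.

Lemma eq_ndiff m f g : f =1 g -> ndiff m f =1 ndiff m g.
Proof. by move=> efg; elim: m => [|m IH] n //=; rewrite /ndelta !IH. Qed.

Lemma ndiffSr m f : ndiff m.+1 f =1 ndiff m (ndelta f).
Proof. by move=> n; rewrite /ndiff iterSr. Qed.

Lemma ndiffD m f g n : ndiff m (fun k => f k + g k) n = ndiff m f n + ndiff m g n.
Proof. by elim: m n => [|m IH] n //=; rewrite /ndelta !IH; ring. Qed.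

Lemma ndiff_shift m f N n : ndiff m (fun k => f (k + N)%N) n = ndiff m f (n + N)%N.
Proof. by elim: m n => [|m IH] n //=; rewrite /ndelta !IH. Qed.

Lemma ndiff_abs_le m f (b : nat -> R) n0 :
  (forall n, (n0 <= n)%N -> Rabs (f n) <= b n) ->
  (forall n, (n0 <= n)%N -> b n.+1 <= b n) ->
  forall n, (n0 <= n)%N -> Rabs (ndiff m f n) <= 2 ^ m * b n.
Proof.
move=> fb bdecr; elim: m => [|m IH] n hn /=; first by rewrite Rmult_1_l; apply: fb.
rewrite /ndelta; apply: Rle_trans (Rabs_triang _ _) _; rewrite Rabs_Ropp.
have := IH n.+1 (leqW hn); have := IH n hn; have := bdecr n hn.
have : 0 < 2 ^ m by apply: pow_lt; lra.
nra.
Qed.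

Lemma pow_m1_odd k : (-1) ^ k = if odd k then -1 else 1.
Proof. by elim: k => //= k ->; case: (odd k) => /=; ring. Qed.

Lemma iter_ratio_op_exp (z : nat -> R) : (forall n, 0 < z n) ->
  forall r n, iter r (@ratio_op R) z n = exp (ndiff r (fun k => ln (z k)) n).
Proof.
move=> zpos; elim=> [|r IH] n /=; first by rewrite exp_ln.
by rewrite /ratio_op /ndelta -RdivE !IH /Rdiv /Rminus exp_plus exp_Ropp.
Qed.

Lemma iter_ratio_op_mul (z : nat -> R) r n : (forall n, 0 < z n) ->
  iter r (@ratio_op R) z n * iter r (@ratio_op R) z n.+2 =
  exp (ndiff r.+2 (fun k => ln (z k)) n) * iter r (@ratio_op R) z n.+1 ^ 2.
Proof.
move=> zpos; rewrite !iter_ratio_op_exp //= /ndelta.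
by rewrite Rmult_1_r -!exp_plus; congr exp; ring.
Qed.

Lemma log_monotonic_of_ndiff_sign (z : nat -> R) k : (forall n, 0 < z n) ->
  (forall r n, (r < k)%N -> 0 < (-1) ^ r * ndiff r.+2 (fun m => ln (z m)) n) ->
  log_monotonic_of_order k z.
Proof.
move=> zpos sign r hr; split=> hodd n; apply/RleP; rewrite -RpowE -RmultE.
all: rewrite iter_ratio_op_mul //; have := sign r n hr.
all: rewrite pow_m1_odd ?hodd ?(negbTE hodd) => hsign.
- rewrite -[X in _ <= X]Rmult_1_l; apply: Rmult_le_compat_r; first exact: pow2_ge_0.
  by rewrite -exp_0; apply/Rlt_le/exp_increasing; lra.
- rewrite -[X in X <= _]Rmult_1_l; apply: Rmult_le_compat_r; first exact: pow2_ge_0.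
  by rewrite -exp_0; apply/Rlt_le/exp_increasing; lra.
Qed.

Lemma ln_sub_le a b : 0 < a -> 0 < b -> ln b - ln a <= (b - a) / a.
Proof.
move=> ha hb; have := exp_ineq1_le (ln (b * / a)).
rewrite exp_ln; last by apply: Rmult_lt_0_compat => //; apply: Rinv_0_lt_compat.
rewrite ln_mult ?ln_Rinv //; last by apply: Rinv_0_lt_compat.
by rewrite (_ : (b - a) / a = b * / a - 1); [lra | field; lra].
Qed.

Lemma unbounded_of_doubling (u : nat -> R) n0 : 0 < u n0 ->
  (forall n, (n0 <= n)%N -> 2 * u n <= u n.+1) ->
  forall K, exists M, forall n, (M <= n)%N -> K < u n.
Proof.
move=> hu0 hu K.
have lin i : INR i.+1 * u n0 <= u (n0 + i)%N.
  elim: i => [|i IH]; first by rewrite addn0 /=; lra.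
  have := hu (n0 + i)%N (leq_addr _ _); rewrite addnS S_INR.
  have : 1 <= INR i.+1 by apply: (le_INR 1); lia.
  nra.
have [j hj] := INR_unbounded (K / u n0).
exists (n0 + j)%N => n hn; rewrite (_ : n = n0 + (n - n0))%N; last lia.
apply: Rlt_le_trans (lin _).
have : INR j <= INR (n - n0).+1 by apply: le_INR; lia.
have : K = K / u n0 * u n0 by field; lra.
nra.
Qed.

Lemma pow_m1_bound k : -1 <= (-1) ^ k <= 1.
Proof. by elim: k => [|k IH] /=; lra. Qed.

Lemma INR_ge2 n : (2 <= n)%N -> 2 <= INR n.
Proof. by move=> hn; have := le_INR 2 n ltac:(lia); rewrite [INR 2]/=; lra. Qed.

Lemma eventually_forall_lt (P : nat -> nat -> Prop) :
  (forall m, exists M, forall n, (M <= n)%N -> P m n) ->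
  forall k, exists N, forall m n, (m < k)%N -> (N <= n)%N -> P m n.
Proof.
move=> hP; elim=> [|k [N HN]]; first by exists 0%N.
have [M HM] := hP k; exists (maxn N M) => m n.
rewrite ltnS leq_eqVlt => /orP[/eqP -> | hm] hn; [apply: HM | apply: HN] => //; lia.
Qed.

Section DerangementAsymptotics.

Variable d : nat -> R.
Hypothesis d2 : d 2 = 1.
Hypothesis dS : forall n, d n.+1 = INR n.+1 * d n + (-1) ^ n.+1.

Lemma d_ge1 n : (2 <= n)%N -> 1 <= d n.
Proof.
elim: n => [|n IH] // hn; have [->|hn2] : n = 1%N \/ (2 <= n)%N by lia.
  by rewrite d2; lra.
have := IH hn2; have := pow_m1_bound n.+1.
have := INR_ge2 _ hn2.
by rewrite dS S_INR; nra.
Qed.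

Lemma d_ge_mul n : (2 <= n)%N -> INR n * d n <= d n.+1.
Proof.
by move=> hn; have := d_ge1 _ hn; have := pow_m1_bound n.+1; rewrite dS S_INR; lra.
Qed.

Lemma d_le_succ n : (2 <= n)%N -> d n <= d n.+1.
Proof.
move=> hn; have := d_ge_mul _ hn; have := d_ge1 _ hn.
have := INR_ge2 _ hn.
nra.
Qed.

Lemma ln_ratio_error n : (2 <= n)%N ->
  Rabs (ln (d n.+1) - ln (d n) - ln (INR n + 1)) <= / d n.
Proof.
move=> hn; have d1 := d_ge1 _ hn; have := pos_INR n.
set a := (INR n + 1) * d n; set b := d n.+1 => hn0.
have hb : d n <= b := d_le_succ _ hn.
have ha : d n <= a by rewrite /a; nra.
have eb : b = a + (-1) ^ n.+1 by rewrite /b dS S_INR.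
have := pow_m1_bound n.+1.
have -> : ln b - ln (d n) - ln (INR n + 1) = ln b - ln a by rewrite /a ln_mult; lra.
have := ln_sub_le a b ltac:(lra) ltac:(lra).
have := ln_sub_le b a ltac:(lra) ltac:(lra).
have : / a <= / d n by apply: Rinv_le_contravar; lra.
have : / b <= / d n by apply: Rinv_le_contravar; lra.
have : 0 < / a by apply: Rinv_0_lt_compat; lra.
have : 0 < / b by apply: Rinv_0_lt_compat; lra.
rewrite /Rdiv eb => *; apply: Rabs_le; nra.
Qed.

Lemma d_over_poly_doubling A q n : 0 <= A -> (2 <= n)%N -> 2 ^ q.+1 <= INR n ->
  2 * (d n / (INR n + A) ^ q) <= d n.+1 / (INR n.+1 + A) ^ q.
Proof.
move=> hA hn hnq; have := INR_ge2 _ hn; have := d_ge1 _ hn => hd1 hn2.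
have hP : 0 < (INR n + A) ^ q by apply: pow_lt; lra.
have h2q : 0 < 2 ^ q by apply: pow_lt; lra.
have hPS : (INR n.+1 + A) ^ q <= 2 ^ q * (INR n + A) ^ q.
  by rewrite -Rpow_mult_distr; apply: pow_incr; rewrite S_INR; lra.
have hdS : 2 ^ q.+1 * d n <= d n.+1.
  have := d_ge_mul _ hn.
  have : 0 <= (INR n - 2 ^ q.+1) * d n by apply: Rmult_le_pos; lra.
  lra.
have -> : 2 * (d n / (INR n + A) ^ q) = 2 ^ q.+1 * d n / (2 ^ q * (INR n + A) ^ q).
  by rewrite /=; field; lra.
apply: (Rle_trans _ (d n.+1 / (2 ^ q * (INR n + A) ^ q))).
  by apply: Rmult_le_compat_r => //; apply/Rlt_le/Rinv_0_lt_compat/Rmult_lt_0_compat.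
apply: Rmult_le_compat_l; first by have := d_ge1 _ (leqW hn); lra.
by apply: Rinv_le_contravar => //; apply: pow_lt; rewrite S_INR; lra.
Qed.

Lemma d_dominates_poly K A q : 0 <= A ->
  exists M, forall n, (M <= n)%N -> K * (INR n + A) ^ q < d n.
Proof.
move=> hA; have [n1 hn1] := INR_unbounded (2 ^ q.+1).
have Ppos n : (2 <= n)%N -> 0 < (INR n + A) ^ q.
  by move=> hn; apply: pow_lt; have := INR_ge2 _ hn; lra.
set u := fun n => d n / (INR n + A) ^ q.
have hn0 : (2 <= maxn n1 2)%N := leq_maxr _ _.
have u_pos : 0 < u (maxn n1 2).
  by apply: Rdiv_lt_0_compat (Ppos _ hn0); have := d_ge1 _ hn0; lra.
have u_doubling n : (maxn n1 2 <= n)%N -> 2 * u n <= u n.+1.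
  move=> hn; apply: d_over_poly_doubling => //; first lia.
  by have := le_INR n1 n ltac:(lia); lra.
have [M HM] := unbounded_of_doubling _ _ u_pos u_doubling K.
exists (maxn M 2) => n hn.
by apply/(Rlt_div_r _ _ _ (Ppos n ltac:(lia)))/HM; lia.
Qed.

Definition log_ratio (n : nat) : R := ln (d n.+1) - ln (d n).

Lemma ndiff_log_ratio_sign m :
  exists M, forall n, (M <= n)%N -> 0 < (-1) ^ m * ndiff m.+1 log_ratio n.
Proof.
have [c hc ln_bound] := rdiff_ln_lower_bound m.
have [M HM] := d_dominates_poly (2 ^ m.+1 / c) (1 + INR m.+1) m.+1
  ltac:(have := pos_INR m.+1; lra).
exists (maxn M 2) => n hn.
set err := fun k => log_ratio k - ln (INR k + 1).
have -> : ndiff m.+1 log_ratio n = rdiff m.+1 ln (INR n + 1) + ndiff m.+1 err n.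
  by rewrite -ndiff_rdiff -ndiffD; apply: eq_ndiff => k; rewrite /err; ring.
have inv_d_decr k : (2 <= k)%N -> / d k.+1 <= / d k.
  by move=> hk; apply: Rinv_le_contravar (d_le_succ _ hk); have := d_ge1 _ hk; lra.
have err_bound := ndiff_abs_le m.+1 err _ 2 ln_ratio_error inv_d_decr n ltac:(lia).
have := ln_bound (INR n + 1) ltac:(have := pos_INR n; lra).
set P := (INR n + 1 + INR m.+1) ^ m.+1 => main_bound.
have hd := d_ge1 n ltac:(lia).
have hP : 0 < P by apply: pow_lt; have := pos_INR n; have := pos_INR m.+1; lra.
have err_small : 2 ^ m.+1 * / d n < c / P.
  have := HM n ltac:(lia); rewrite -Rplus_assoc -/P => dom.
  apply: (Rmult_lt_reg_r (P * d n / c)); first by apply: Rdiv_lt_0_compat; nra.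
  replace (2 ^ m.+1 * / d n * (P * d n / c)) with (2 ^ m.+1 / c * P) by (field; lra).
  by replace (c / P * (P * d n / c)) with (d n) by (field; lra).
have := Rle_abs (- ((-1) ^ m * ndiff m.+1 err n)).
by rewrite Rabs_Ropp Rabs_mult pow_1_abs; lra.
Qed.

Lemma eventually_log_monotonic k :
  exists2 N, (3 <= N)%N & log_monotonic_of_order k (fun m => d (m + N)%N).
Proof.
have [N HN] := eventually_forall_lt _ ndiff_log_ratio_sign k.
exists (maxn N 3); first exact: leq_maxr.
apply: log_monotonic_of_ndiff_sign => [n | r n hr].
  by have := d_ge1 (n + maxn N 3) ltac:(lia); lra.
have -> : ndiff r.+2 (fun m => ln (d (m + maxn N 3)%N)) n =
          ndiff r.+1 log_ratio (n + maxn N 3).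
  rewrite ndiffSr -ndiff_shift; apply: eq_ndiff => j.
  by rewrite /ndelta /log_ratio addSn.
by apply: HN => //; lia.
Qed.

End DerangementAsymptotics.

Lemma derangement_numberS_real n : INR (derangement_number n.+1) =
  INR n.+1 * INR (derangement_number n) + (-1) ^ n.+1.
Proof.
rewrite !INRE RpowE RmultE RplusE.
have := congr1 (fun z : int => (z%:~R)%R : R) (derangement_numberS n).
by rewrite /= rmorphD rmorphXn rmorphN1 !rmorph_nat natrM.
Qed.

Lemma derangement_number2_real : INR (derangement_number 2) = 1.
Proof. by rewrite !derangement_numberS_real derangement_number0 /=; ring. Qed.

Section RationalTransfer.
Local Open Scope ring_scope.
Variable F : realFieldType.

Lemma iter_ratio_op_ratr (x : nat -> rat) (z : nat -> F) :
  (forall n, z n = ratr (x n)) ->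
  forall r n, iter r (@ratio_op F) z n = ratr (iter r (@ratio_op rat) x n).
Proof. by move=> zx; elim=> [|r IH] n //=; rewrite /ratio_op !IH fmorph_div. Qed.

Lemma log_monotonic_of_order_ratr k (x : nat -> rat) (z : nat -> F) :
  (forall n, z n = ratr (x n)) ->
  log_monotonic_of_order k z <-> log_monotonic_of_order k x.
Proof.
move=> zx; split=> H r hr; have [Hcave Hvex] := H r hr.
all: split=> hodd n; [have := Hcave hodd n | have := Hvex hodd n].
all: by rewrite !(iter_ratio_op_ratr _ _ zx) -!rmorphXn -!rmorphM ler_rat.
Qed.

End RationalTransfer.

Close Scope R_scope.
Local Open Scope ring_scope.

Theorem theorem3p1 (R : realFieldType) :
  forall k : nat, exists N : nat, (3 <= N)%N /\
    log_monotonic_of_order k (fun m : nat => (derangement_number (m + N))%:R : R).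
Proof.
move=> k; have [N hN Hmono] := eventually_log_monotonic _
  derangement_number2_real derangement_numberS_real k.
exists N; split => //.
pose x m : rat := (derangement_number (m + N))%:R.
apply/(log_monotonic_of_order_ratr R k x) => [m|]; first by rewrite ratr_nat.
apply: (log_monotonic_of_order_ratr _ k x _ _).1 Hmono => m.
by rewrite ratr_nat INRE.
Qed.
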